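(* For every $i=1,\dots,n$ and every polygon in $\mathcal P_n$, the derivative of the perimeter $F$ in the direction of $\xi_i$ vanishes: $\xi_i(F)=0$. Thus the distribution $\mathcal D_n$ is tangent to the level hypersurfaces of $F$.
   Context: Let $n\ge3$ and let $\mathcal P_n$ be the $2n$-dimensional manifold of convex $n$-gons in $\mathbb R^2$. A polygon is encoded by the lines of its sides, cyclically ordered counterclockwise (indices mod $n$): $L_i=\{(x,y): x\cos\alpha_i+y\sin\alpha_i=p_i\}$, where $(\cos\alpha_i,\sin\alpha_i)$ is the outer unit normal of the $i$-th side. Thus $(\alpha_1,p_1,\dots,\alpha_n,p_n)$ are local coordinates, with $0<\alpha_{i+1}-\alpha_i<\pi$ (mod $2\pi$) and total turning $2\pi$. The positive side of $L_i$ is the open half-plane into which its outer normal points; the negative side is the other one, which contains the polygon. For each $i$, let $K_i$ be the circle tangent to the three lines $L_{i-1},L_i,L_{i+1}$ that lies on the negative sides of $L_{i-1}$ and $L_{i+1}$ and on the positive side of $L_i$. Let $C_i$ be its tangency point with $L_i$. Let $\xi_i$ be the vector field on $\mathcal P_n$ given by the infinitesimal counterclockwise rotation of the line $L_i$ about the point $C_i$, all other sides fixed. In coordinates, $\xi_i=\partial_{\alpha_i}+\det\big((\cos\alpha_i,\sin\alpha_i),C_i\big)\,\partial_{p_i}$. The distribution $\mathcal D_n$ is spanned by $\xi_1,\dots,\xi_n$. $F:\mathcal P_n\to\mathbb R$ is the perimeter. *)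

From Stdlib Require Import Reals Lra Lia ZArith Arith.
From Coquelicot Require Import Coquelicot.
Open Scope R_scope.

(* A polygon with n sides is encoded by the coordinates (alpha_i, p_i),
   i = 0..n-1 (values of the functions at indices >= n are irrelevant).
   Side i lies on L_i = {(x,y) | x cos alpha_i + y sin alpha_i = p_i},
   with outer unit normal (cos alpha_i, sin alpha_i). *)

Definition nxt (n i : nat) : nat := Nat.modulo (S i) n.
Definition prv (n i : nat) : nat := Nat.modulo (i + n - 1) n.

Fixpoint sumR (n : nat) (f : nat -> R) : R :=
  match n with
  | O => 0
  | S m => sumR m f + f m
  end.

(* Vertex V_i = L_i ∩ L_{i+1} (Cramer's rule; the determinant is
   sin(alpha_{i+1} - alpha_i), nonzero on P_n). *)
Definition vdet (n : nat) (a : nat -> R) (i : nat) : R :=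
  cos (a i) * sin (a (nxt n i)) - sin (a i) * cos (a (nxt n i)).
Definition vx (n : nat) (a p : nat -> R) (i : nat) : R :=
  (p i * sin (a (nxt n i)) - p (nxt n i) * sin (a i)) / vdet n a i.
Definition vy (n : nat) (a p : nat -> R) (i : nat) : R :=
  (cos (a i) * p (nxt n i) - cos (a (nxt n i)) * p i) / vdet n a i.

Definition side_length (n : nat) (a p : nat -> R) (i : nat) : R :=
  sqrt ((vx n a p i - vx n a p (prv n i))^2 + (vy n a p i - vy n a p (prv n i))^2).

(* Signed length of side i along the counterclockwise unit tangent
   (-sin alpha_i, cos alpha_i). *)
Definition signed_side (n : nat) (a p : nat -> R) (i : nat) : R :=
  (vx n a p i - vx n a p (prv n i)) * (- sin (a i))
  + (vy n a p i - vy n a p (prv n i)) * cos (a i).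

Definition perimeter (n : nat) (a p : nat -> R) : R :=
  sumR n (fun i => side_length n a p i).

(* (alpha, p) are the coordinates of a convex n-gon in P_n:
   each turning angle alpha_{i+1}-alpha_i is, mod 2 pi, in (0, pi),
   the total turning is 2 pi, and every side has positive length. *)
Definition is_convex_ngon (n : nat) (a p : nat -> R) : Prop :=
  (exists d : nat -> R,
      (forall i, (i < n)%nat ->
         0 < d i < PI /\ exists k : Z, a (nxt n i) - a i = d i + 2 * PI * IZR k)
      /\ sumR n d = 2 * PI)
  /\ (forall i, (i < n)%nat -> 0 < signed_side n a p i).

Definition sdist (a p : nat -> R) (j : nat) (x y : R) : R :=
  x * cos (a j) + y * sin (a j) - p j.

(* (cx, cy) is the tangency point C_i of L_i with the circle K_i, which is
   tangent to L_{i-1}, L_i, L_{i+1}, lies on the positive side of L_i and on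
   the negative sides of L_{i-1}, L_{i+1}. *)
Definition is_tangency_point (n : nat) (a p : nat -> R) (i : nat) (cx cy : R) : Prop :=
  exists ox oy r : R,
    0 < r
    /\ sdist a p i ox oy = r
    /\ sdist a p (prv n i) ox oy = - r
    /\ sdist a p (nxt n i) ox oy = - r
    /\ cx = ox - r * cos (a i)
    /\ cy = oy - r * sin (a i).

Definition bump (f : nat -> R) (i : nat) (t : R) : nat -> R :=
  fun j => if Nat.eqb j i then f j + t else f j.

(* The p_i-component of xi_i: det((cos alpha_i, sin alpha_i), C_i). *)
Definition xi_coef (a : nat -> R) (i : nat) (cx cy : R) : R :=
  cos (a i) * cy - sin (a i) * cx.

From Stdlib Require Import Reals Lra Lia FunctionalExtensionality.
From Coquelicot Require Import Coquelicot.
Open Scope R_scope.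

(* Rotating L_i about C_i moves only V_{i-1} and V_i, which slide along the fixed sides
   L_{i-1} and L_{i+1} with speeds u and w.  The first variation of the perimeter is
   therefore u (1 - cos θ_{i-1}) - w (1 - cos θ_i), θ_j being the turning angle at V_j.
   Implicit differentiation gives the speed of a vertex V as |C_i V| / sin θ, and
   |C_i V| = r cot (θ/2) is a tangent length of the circle K_i of radius r, so both
   products equal r and cancel. *)

Lemma nxt_spec n k : (k < n)%nat ->
  (S k < n /\ nxt n k = S k)%nat \/ (S k = n /\ nxt n k = 0)%nat.
Proof.
  intros hk; unfold nxt. destruct (Nat.eq_dec (S k) n) as [<-|hne].
  - right; split; [reflexivity | apply Nat.Div0.mod_same].
  - left; split; [lia | apply Nat.mod_small; lia].
Qed.

Lemma prv_spec n k : (k < n)%nat ->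
  (0 < k /\ prv n k = k - 1)%nat \/ (k = 0 /\ prv n k = n - 1)%nat.
Proof.
  intros hk; unfold prv. destruct k as [|k].
  - right; split; [reflexivity | apply Nat.mod_small; lia].
  - left; split; [lia|].
    replace (S k + n - 1)%nat with (k + 1 * n)%nat by lia.
    rewrite Nat.Div0.mod_add, Nat.mod_small; lia.
Qed.

Lemma nxt_lt n k : (k < n)%nat -> (nxt n k < n)%nat.
Proof. intros hk; destruct (nxt_spec n k hk); lia. Qed.

Lemma prv_lt n k : (k < n)%nat -> (prv n k < n)%nat.
Proof. intros hk; destruct (prv_spec n k hk); lia. Qed.

Lemma nxt_neq n k : (2 <= n)%nat -> (k < n)%nat -> nxt n k <> k.
Proof. intros hn hk; destruct (nxt_spec n k hk); lia. Qed.

Lemma prv_neq n k : (2 <= n)%nat -> (k < n)%nat -> prv n k <> k.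
Proof. intros hn hk; destruct (prv_spec n k hk); lia. Qed.

Lemma prv_neq_nxt n k : (3 <= n)%nat -> (k < n)%nat -> prv n k <> nxt n k.
Proof. intros hn hk; destruct (prv_spec n k hk), (nxt_spec n k hk); lia. Qed.

Lemma prv_eq_iff n j k : (j < n)%nat -> (k < n)%nat -> prv n j = k <-> j = nxt n k.
Proof. intros hj hk; destruct (prv_spec n j hj), (nxt_spec n k hk); lia. Qed.

Lemma nxt_prv n k : (k < n)%nat -> nxt n (prv n k) = k.
Proof. intros hk; symmetry; apply prv_eq_iff; auto using prv_lt. Qed.

Lemma prv_nxt n k : (k < n)%nat -> prv n (nxt n k) = k.
Proof. intros hk; apply prv_eq_iff; auto using nxt_lt. Qed.

Lemma sumR_ext n f g : (forall j, (j < n)%nat -> f j = g j) -> sumR n f = sumR n g.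
Proof. induction n; intros h; simpl; [reflexivity|]. rewrite IHn, h; auto. Qed.

Lemma sumR_zero n f : (forall j, (j < n)%nat -> f j = 0) -> sumR n f = 0.
Proof. induction n; intros h; simpl; [reflexivity|]. rewrite IHn, h; auto; ring. Qed.

Lemma sumR_extract n g k : (k < n)%nat ->
  sumR n g = g k + sumR n (fun j => if Nat.eqb j k then 0 else g j).
Proof.
  induction n as [|n IH]; intros hk; [lia|]. simpl.
  destruct (Nat.eqb_spec n k) as [->|hne].
  - rewrite (sumR_ext k (fun j => if Nat.eqb j k then 0 else g j) g); [ring|].
    intros j hj; destruct (Nat.eqb_spec j k); [lia | reflexivity].
  - rewrite (IH ltac:(lia)); ring.
Qed.

Lemma sumR_three n g k1 k2 k3 : (k1 < n)%nat -> (k2 < n)%nat -> (k3 < n)%nat ->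
  k1 <> k2 -> k1 <> k3 -> k2 <> k3 ->
  (forall j, (j < n)%nat -> j <> k1 -> j <> k2 -> j <> k3 -> g j = 0) ->
  sumR n g = g k1 + g k2 + g k3.
Proof.
  intros h1 h2 h3 d12 d13 d23 hg.
  rewrite (sumR_extract n g k1), (sumR_extract n _ k2), (sumR_extract n _ k3) by assumption.
  rewrite (sumR_zero n).
  - destruct (Nat.eqb_spec k2 k1), (Nat.eqb_spec k3 k2), (Nat.eqb_spec k3 k1); try lia; ring.
  - intros j hj.
    destruct (Nat.eqb_spec j k3), (Nat.eqb_spec j k2), (Nat.eqb_spec j k1); auto.
Qed.

Lemma is_derive_sumR n (f : R -> nat -> R) df x :
  (forall j, (j < n)%nat -> is_derive (fun t => f t j) x (df j)) ->
  is_derive (fun t => sumR n (f t)) x (sumR n df).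
Proof.
  induction n; intros h; simpl.
  - exact (@is_derive_const R_AbsRing R_NormedModule 0 x).
  - apply (is_derive_plus (fun t => sumR n (f t))); auto.
Qed.

Definition cross (a b : R) : R := cos a * sin b - sin a * cos b.

(* Cramer's rule for the intersection of
   {x cos a + y sin a = p} and {x cos b + y sin b = q}. *)
Definition meet_x (a p b q : R) : R := (p * sin b - q * sin a) / cross a b.
Definition meet_y (a p b q : R) : R := (cos a * q - cos b * p) / cross a b.

Lemma vx_meet n a p k : vx n a p k = meet_x (a k) (p k) (a (nxt n k)) (p (nxt n k)).
Proof. reflexivity. Qed.

Lemma vy_meet n a p k : vy n a p k = meet_y (a k) (p k) (a (nxt n k)) (p (nxt n k)).
Proof. reflexivity. Qed.

Lemma cross_sin a b : cross a b = sin (b - a).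
Proof. unfold cross; rewrite sin_minus; ring. Qed.

Lemma cross_comm a b : cross b a = - cross a b.
Proof. unfold cross; ring. Qed.

Lemma meet_x_comm a p b q : meet_x b q a p = meet_x a p b q.
Proof. unfold meet_x, Rdiv; rewrite cross_comm, Rinv_opp; ring. Qed.

Lemma meet_y_comm a p b q : meet_y b q a p = meet_y a p b q.
Proof. unfold meet_y, Rdiv; rewrite cross_comm, Rinv_opp; ring. Qed.

Lemma meet_on_lines a p b q : cross a b <> 0 ->
  meet_x a p b q * cos a + meet_y a p b q * sin a = p /\
  meet_x a p b q * cos b + meet_y a p b q * sin b = q.
Proof. intros h; unfold meet_x, meet_y, cross in *; split; field; exact h. Qed.

Lemma cross_sqr a b : cross a b ^ 2 = (1 - cos (a - b)) * (1 + cos (a - b)).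
Proof.
  pose proof (sin2_cos2 a) as ha; pose proof (sin2_cos2 b) as hb; unfold Rsqr in ha, hb.
  unfold cross; rewrite cos_minus.
  transitivity (1 - (cos a * cos b + sin a * sin b) ^ 2); [| ring].
  replace 1 with ((sin a * sin a + cos a * cos a) * (sin b * sin b + cos b * cos b))
    by (rewrite ha, hb; ring).
  ring.
Qed.

Lemma sin_plus_2kPI d k : sin (d + 2 * PI * IZR k) = sin d.
Proof.
  assert (hs : sin (IZR k * PI) = 0) by (apply sin_eq_0_1; now exists k).
  replace (2 * PI * IZR k) with (2 * (IZR k * PI)) by ring.
  rewrite sin_plus, sin_2a, cos_2a_sin, hs; ring.
Qed.

Lemma cross_pos_of_turn a b d k : 0 < d < PI -> b - a = d + 2 * PI * IZR k -> 0 < cross a b.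
Proof. intros hd hba; rewrite cross_sin, hba, sin_plus_2kPI; apply sin_gt_0; lra. Qed.

(* When the first line is rotated with unit angular speed while its offset changes with
   speed c, the intersection slides along the second line with this speed. *)
Definition meet_speed (a p b q c : R) : R :=
  (- sin a * meet_x a p b q + cos a * meet_y a p b q - c) / cross a b.

Lemma is_derive_meet a p b q c : cross a b <> 0 ->
  is_derive (fun t => meet_x (a + t) (p + t * c) b q) 0 (- sin b * meet_speed a p b q c) /\
  is_derive (fun t => meet_y (a + t) (p + t * c) b q) 0 (cos b * meet_speed a p b q c).
Proof.
  intros h; unfold meet_speed, meet_x, meet_y, cross in *.
  split; auto_derive; rewrite ?Rplus_0_r; try exact h; field; exact h.
Qed.

(* (ox, oy) is the centre of a circle of radius r touching the first line from its
   positive side and the second from its negative side; the offset speed is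
   det((cos a, sin a), C) for its tangency point C with the first line. *)
Lemma meet_speed_tangent a p b q ox oy r : cross a b <> 0 ->
  ox * cos a + oy * sin a - p = r -> ox * cos b + oy * sin b - q = - r ->
  meet_speed a p b q (cos a * (oy - r * sin a) - sin a * (ox - r * cos a))
  * (1 - cos (a - b)) = r.
Proof.
  intros h hp hq.
  assert (hlen : meet_speed a p b q (cos a * (oy - r * sin a) - sin a * (ox - r * cos a))
                 * cross a b ^ 2 = r * (1 + cos (a - b))).
  { pose proof (sin2_cos2 a) as ha; unfold Rsqr in ha.
    unfold meet_speed, meet_x, meet_y; rewrite cos_minus.
    replace p with (ox * cos a + oy * sin a - r) by lra.
    replace q with (ox * cos b + oy * sin b + r) by lra.
    unfold cross in *; field_simplify; [| exact h].
    apply (f_equal (Rmult r)) in ha; lra. }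
  apply (Rmult_eq_reg_r (cross a b ^ 2)); [| now apply pow_nonzero].
  rewrite Rmult_assoc, (Rmult_comm (1 - _)), <- Rmult_assoc, hlen, cross_sqr; ring.
Qed.

Lemma is_derive_length_along (U V : R -> R) dU dV x th s :
  is_derive U x dU -> is_derive V x dV -> 0 < s ->
  U x = - s * sin th -> V x = s * cos th ->
  is_derive (fun t => sqrt (U t ^ 2 + V t ^ 2)) x (- sin th * dU + cos th * dV).
Proof.
  intros hU hV hs hUx hVx.
  assert (hlen : U x ^ 2 + V x ^ 2 = s ^ 2).
  { rewrite hUx, hVx. pose proof (sin2_cos2 th) as h; unfold Rsqr in h; nra. }
  assert (hsq : is_derive (fun t => U t ^ 2 + V t ^ 2) x
                  (plus (INR 2 * dU * U x ^ 1) (INR 2 * dV * V x ^ 1)))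
    by exact (is_derive_plus _ _ _ _ _ (is_derive_pow _ 2 _ _ hU) (is_derive_pow _ 2 _ _ hV)).
  pose proof (is_derive_sqrt _ _ _ hsq) as h; cbv beta in h.
  rewrite hlen, sqrt_pow2 in h by lra.
  replace (- sin th * dU + cos th * dV) with
    (plus (INR 2 * dU * U x ^ 1) (INR 2 * dV * V x ^ 1) / (2 * s)).
  - apply h; nra.
  - rewrite hUx, hVx; simpl; unfold plus; simpl; field; lra.
Qed.

Lemma diff_along_line a x1 y1 x2 y2 :
  x1 * cos a + y1 * sin a = x2 * cos a + y2 * sin a ->
  x1 - x2 = - ((x1 - x2) * - sin a + (y1 - y2) * cos a) * sin a /\
  y1 - y2 = ((x1 - x2) * - sin a + (y1 - y2) * cos a) * cos a.
Proof.
  intros h; pose proof (sin2_cos2 a) as hu; unfold Rsqr in hu.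
  split; apply Rminus_diag_uniq.
  - transitivity (cos a * (x1 * cos a + y1 * sin a - (x2 * cos a + y2 * sin a))
                  + (x1 - x2) * (1 - (sin a * sin a + cos a * cos a))); [ring|].
    rewrite h, hu; ring.
  - transitivity (sin a * (x1 * cos a + y1 * sin a - (x2 * cos a + y2 * sin a))
                  + (y1 - y2) * (1 - (sin a * sin a + cos a * cos a))); [ring|].
    rewrite h, hu; ring.
Qed.

Lemma is_derive_perimeter n (A P : R -> nat -> R) dX dY x :
  (forall j, (j < n)%nat -> cross (A x j) (A x (nxt n j)) <> 0) ->
  (forall j, (j < n)%nat -> 0 < signed_side n (A x) (P x) j) ->
  (forall k, (k < n)%nat -> is_derive (fun t => vx n (A t) (P t) k) x (dX k)) ->
  (forall k, (k < n)%nat -> is_derive (fun t => vy n (A t) (P t) k) x (dY k)) ->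
  is_derive (fun t => perimeter n (A t) (P t)) x
    (sumR n (fun j => - sin (A x j) * (dX j - dX (prv n j))
                      + cos (A x j) * (dY j - dY (prv n j)))).
Proof.
  intros hcross hside hX hY. apply is_derive_sumR; intros j hj.
  assert (hpj : (prv n j < n)%nat) by (apply prv_lt; exact hj).
  destruct (meet_on_lines _ (P x j) _ (P x (nxt n j)) (hcross j hj)) as [hVj _].
  destruct (meet_on_lines _ (P x (prv n j)) _ (P x (nxt n (prv n j))) (hcross _ hpj))
    as [_ hVpj].
  rewrite <- vx_meet, <- vy_meet in hVj, hVpj.
  rewrite nxt_prv in hVpj by exact hj. rewrite <- hVpj in hVj.
  destruct (diff_along_line _ _ _ _ _ hVj) as [hdx hdy].
  apply (is_derive_length_along _ _ _ _ x (A x j) (signed_side n (A x) (P x) j)); auto.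
  - apply (is_derive_minus (fun t => vx n (A t) (P t) j)); auto.
  - apply (is_derive_minus (fun t => vy n (A t) (P t) j)); auto.
Qed.

Lemma bump_same (f : nat -> R) i t : bump f i t i = f i + t.
Proof. unfold bump; now rewrite Nat.eqb_refl. Qed.

Lemma bump_other (f : nat -> R) i t k : k <> i -> bump f i t k = f k.
Proof. intros h; unfold bump; now destruct (Nat.eqb_spec k i). Qed.

Lemma bump_0 (f : nat -> R) i : bump f i 0 = f.
Proof. apply functional_extensionality; intros k; unfold bump; destruct (k =? i); ring. Qed.

(* One coordinate of the velocity of the vertex V_k, with [dir] = (fun b => - sin b) for
   the abscissa and [cos] for the ordinate: V_i slides along L_{i+1}, V_{i-1} along
   L_{i-1}, and all other vertices are fixed. *)
Definition rotation_velocity (n : nat) (a p : nat -> R) (i : nat) (c : R)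
    (dir : R -> R) (k : nat) : R :=
  if k =? i then dir (a (nxt n i)) * meet_speed (a i) (p i) (a (nxt n i)) (p (nxt n i)) c
  else if k =? prv n i then
    dir (a (prv n i)) * meet_speed (a i) (p i) (a (prv n i)) (p (prv n i)) c
  else 0.

Lemma rotation_velocity_at n a p i c dir :
  rotation_velocity n a p i c dir i
  = dir (a (nxt n i)) * meet_speed (a i) (p i) (a (nxt n i)) (p (nxt n i)) c.
Proof. unfold rotation_velocity; now rewrite Nat.eqb_refl. Qed.

Lemma rotation_velocity_at_prv n a p i c dir : prv n i <> i ->
  rotation_velocity n a p i c dir (prv n i)
  = dir (a (prv n i)) * meet_speed (a i) (p i) (a (prv n i)) (p (prv n i)) c.
Proof.
  intros h; unfold rotation_velocity.
  now rewrite (proj2 (Nat.eqb_neq _ _) h), Nat.eqb_refl.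
Qed.

Lemma rotation_velocity_other n a p i c dir k : k <> i -> k <> prv n i ->
  rotation_velocity n a p i c dir k = 0.
Proof.
  intros h1 h2; unfold rotation_velocity.
  now rewrite (proj2 (Nat.eqb_neq _ _) h1), (proj2 (Nat.eqb_neq _ _) h2).
Qed.

Section Rotation.

Variables (n : nat) (a p : nat -> R) (i : nat) (c : R).
Hypotheses (hn : (3 <= n)%nat) (hi : (i < n)%nat).

Let velocity_x := rotation_velocity n a p i c (fun b => - sin b).
Let velocity_y := rotation_velocity n a p i c cos.

Lemma is_derive_rotated_vertex k : (k < n)%nat ->
  cross (a i) (a (nxt n i)) <> 0 -> cross (a i) (a (prv n i)) <> 0 ->
  is_derive (fun t => vx n (bump a i t) (bump p i (t * c)) k) 0 (velocity_x k) /\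
  is_derive (fun t => vy n (bump a i t) (bump p i (t * c)) k) 0 (velocity_y k).
Proof.
  intros hk hnext hprev.
  assert (hnxt : nxt n (prv n i) = i) by (apply nxt_prv; exact hi).
  assert (hni : nxt n i <> i) by (apply nxt_neq; auto; lia).
  assert (hpi : prv n i <> i) by (apply prv_neq; auto; lia).
  unfold velocity_x, velocity_y, rotation_velocity.
  destruct (Nat.eqb_spec k i) as [->|hki]; [|destruct (Nat.eqb_spec k (prv n i)) as [->|hkp]].
  - destruct (is_derive_meet (a i) (p i) (a (nxt n i)) (p (nxt n i)) c hnext) as [hx hy].
    split; eapply is_derive_ext; [| exact hx | | exact hy]; intros t; cbv beta;
      [rewrite vx_meet | rewrite vy_meet];
      rewrite !bump_same, !bump_other by exact hni; reflexivity.
  - destruct (is_derive_meet (a i) (p i) (a (prv n i)) (p (prv n i)) c hprev) as [hx hy].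
    split; eapply is_derive_ext; [| exact hx | | exact hy]; intros t; cbv beta;
      [rewrite vx_meet, meet_x_comm | rewrite vy_meet, meet_y_comm];
      rewrite hnxt, !bump_same, !bump_other by exact hpi; reflexivity.
  - assert (hnk : nxt n k <> i).
    { intros e; apply hkp; symmetry; apply (prv_eq_iff n i k hi hk); congruence. }
    split; (eapply is_derive_ext; [| eapply (@is_derive_const R_AbsRing R_NormedModule)]);
      intros t; cbv beta; [rewrite !vx_meet | rewrite !vy_meet];
      rewrite !bump_other by assumption; reflexivity.
Qed.

Lemma rotation_first_variation :
  sumR n (fun j => - sin (a j) * (velocity_x j - velocity_x (prv n j))
                   + cos (a j) * (velocity_y j - velocity_y (prv n j)))
  = meet_speed (a i) (p i) (a (prv n i)) (p (prv n i)) c * (1 - cos (a i - a (prv n i)))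
    - meet_speed (a i) (p i) (a (nxt n i)) (p (nxt n i)) c * (1 - cos (a i - a (nxt n i))).
Proof.
  assert (hpi_lt : (prv n i < n)%nat) by (apply prv_lt; exact hi).
  assert (hni_lt : (nxt n i < n)%nat) by (apply nxt_lt; exact hi).
  assert (hpi : prv n i <> i) by (apply prv_neq; auto; lia).
  assert (hni : nxt n i <> i) by (apply nxt_neq; auto; lia).
  assert (hpn : prv n i <> nxt n i) by (apply prv_neq_nxt; assumption).
  assert (hpp : prv n (prv n i) <> prv n i) by (apply prv_neq; auto; lia).
  assert (hppi : prv n (prv n i) <> i).
  { intros e; apply hpn; apply (prv_eq_iff n _ i hpi_lt hi), e. }
  rewrite (sumR_three n _ (prv n i) i (nxt n i) hpi_lt hi hni_lt hpi hpn (not_eq_sym hni)).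
  - unfold velocity_x, velocity_y.
    rewrite prv_nxt by exact hi.
    rewrite !rotation_velocity_at, !rotation_velocity_at_prv by exact hpi.
    rewrite !(rotation_velocity_other _ _ _ _ _ _ (prv n (prv n i))) by assumption.
    rewrite !(rotation_velocity_other _ _ _ _ _ _ (nxt n i)) by auto.
    rewrite !cos_minus.
    set (u := meet_speed (a i) (p i) (a (prv n i)) (p (prv n i)) c).
    set (w := meet_speed (a i) (p i) (a (nxt n i)) (p (nxt n i)) c).
    pose proof (sin2_cos2 (a (prv n i))) as hup; pose proof (sin2_cos2 (a (nxt n i))) as hun.
    unfold Rsqr in hup, hun.
    apply (f_equal (Rmult u)) in hup; apply (f_equal (Rmult w)) in hun; lra.
  - intros j hj hjp hji hjn.
    assert (hq1 : prv n j <> i) by (intros e; apply hjn, (prv_eq_iff n j i hj hi), e).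
    assert (hq2 : prv n j <> prv n i).
    { intros e; apply hji. rewrite <- (nxt_prv n j hj), e, nxt_prv by exact hi. reflexivity. }
    unfold velocity_x, velocity_y.
    rewrite !(rotation_velocity_other _ _ _ _ _ _ j),
      !(rotation_velocity_other _ _ _ _ _ _ (prv n j)) by assumption.
    ring.
Qed.

End Rotation.

Theorem mainTheorem7 (n : nat) (hn : (3 <= n)%nat) (a p : nat -> R)
  (hP : is_convex_ngon n a p) (i : nat) (hi : (i < n)%nat) (cx cy : R)
  (hC : is_tangency_point n a p i cx cy) :
  is_derive (fun t : R => perimeter n (bump a i t) (bump p i (t * xi_coef a i cx cy))) 0 0.
Proof.
  destruct hP as [[d [hturn _]] hside].
  assert (hcross : forall k, (k < n)%nat -> cross (a k) (a (nxt n k)) <> 0).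
  { intros k hk; destruct (hturn k hk) as [hd [m hm]].
    exact (Rgt_not_eq _ _ (cross_pos_of_turn _ _ _ m hd hm)). }
  assert (hprev : cross (a i) (a (prv n i)) <> 0).
  { rewrite <- (nxt_prv n i hi) at 1; rewrite cross_comm.
    apply Ropp_neq_0_compat, hcross, prv_lt, hi. }
  destruct hC as (ox & oy & r & hr & hOi & hOp & hOn & -> & ->).
  unfold sdist in hOi, hOp, hOn.
  set (c := xi_coef a i _ _).
  pose proof (is_derive_perimeter n (bump a i) (fun t => bump p i (t * c))
    (rotation_velocity n a p i c (fun b => - sin b)) (rotation_velocity n a p i c cos) 0)
    as hF.
  cbv beta in hF; rewrite Rmult_0_l, !bump_0, rotation_first_variation in hF by assumption.
  unfold c, xi_coef in hF.
  rewrite !meet_speed_tangent in hF by auto.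
  replace (r - r) with 0 in hF by ring.
  apply hF; auto; intros k hk; apply is_derive_rotated_vertex; auto.
Qed.
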